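(* Let $E$ be a directed graph. (1) Every non-empty clopen subset of $\partial E$ contains two distinct points of some single $\mathcal{G}_E$-orbit if and only if $E$ satisfies Conditions (L) and (T). (2) $|\operatorname{Orb}_{\mathcal{G}_E}(x)|\ge3$ for all $x\in\partial E$ if and only if $E$ has no degenerate vertices.
   Context: Graph notation: $E=(E^0,E^1,r,s)$; finite paths $e_1\cdots e_n$ with $r(e_i)=s(e_{i+1})$ (vertices are paths of length $0$); $vE^*w$ the paths from $v$ to $w$; $vE^1$, $E^1v$ edges with source, resp. range, $v$. Sink: $vE^1=\emptyset$; source: $E^1v=\emptyset$; singular: sink or $vE^1$ infinite. Cycle: positive-length path with $r=s$; loop: cycle of length 1; exit of $e_1\cdots e_n$: edge $e\ne e_i$ with $s(e)=s(e_i)$. Condition (L): every cycle has an exit. Condition (T): for every $v$ there is $w$ with $|vE^*w|\ge2$. A vertex $v$ is degenerate if: (1) $E^1v=\{e\}$ with $e$ a loop; or (2) $E^1v=\{e,f\}$, $e$ a loop, $s(f)$ a source; or (3) there is $w\ne v$ with $E^1v=\{e\}=wE^1v$ and $E^1w=\{f\}=vE^1w$; or (4) $vE^1$ infinite and $E^1v=\emptyset$; or (5) $v$ singular and $E^1v=\{f\}$ with $s(f)$ a source; or (6) $vE^1=E^1v=\emptyset$. $\partial E=E^\infty\cup\{\mu: r(\mu)\text{ singular}\}$ with basis $Z(\mu)\setminus\bigcup_{e\in F}Z(\mu e)$ ($Z(\mu)=\{\mu x\in\partial E\}$, $F\subseteq r(\mu)E^1$ finite); $\sigma_E$ deletes the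 first edge (sending a single edge $e$ to $r(e)$). $\mathcal{G}_E=\{(x,m-n,y):m,n\ge0,|x|\ge m,|y|\ge n,\sigma_E^m(x)=\sigma_E^n(y)\}$ with $r(x,k,y)=x$, $s(x,k,y)=y$, unit space $\partial E$; $\operatorname{Orb}_{\mathcal{G}_E}(x)=\{r(g): g\in\mathcal{G}_E, s(g)=x\}$ (equivalently, boundary paths tail equivalent to $x$). *)

From Stdlib Require Import List ZArith.
Import ListNotations.
Set Implicit Arguments.

(* A directed graph E = (E^0, E^1, r, s); no countability assumed. *)
Record graph := Graph {
  vert : Type;
  edge : Type;
  rg : edge -> vert;
  sc : edge -> vert }.
Arguments rg {g} _.
Arguments sc {g} _.

Section G.
Variable E : graph.

(* A finite path is a pair (v, e_1 ... e_n): start vertex v and edges with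
   s(e_1) = v and r(e_i) = s(e_{i+1}); n = 0 gives the vertex v. *)
Fixpoint valid_path (v : vert E) (l : list (edge E)) : Prop :=
  match l with
  | [] => True
  | e :: l' => sc e = v /\ valid_path (rg e) l'
  end.

Fixpoint path_range (v : vert E) (l : list (edge E)) : vert E :=
  match l with
  | [] => v
  | e :: l' => path_range (rg e) l'
  end.

Definition out_finite (v : vert E) : Prop :=
  exists L : list (edge E), forall e, sc e = v -> In e L.

Definition is_sink (v : vert E) : Prop := forall e, sc e <> v.
Definition is_source (v : vert E) : Prop := forall e, rg e <> v.
Definition singular (v : vert E) : Prop := is_sink v \/ ~ out_finite v.

Definition condL : Prop :=
  forall (v : vert E) (l : list (edge E)),
    l <> [] -> valid_path v l -> path_range v l = v ->
    exists i ei e, nth_error l i = Some ei /\ sc e = sc ei /\ e <> ei.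

Definition condT : Prop :=
  forall v : vert E, exists (w : vert E) (l1 l2 : list (edge E)),
    valid_path v l1 /\ valid_path v l2 /\
    path_range v l1 = w /\ path_range v l2 = w /\ l1 <> l2.

Definition degenerate (v : vert E) : Prop :=
  (exists e, (forall g, rg g = v <-> g = e) /\ sc e = rg e)
  \/ (exists e f, (forall g, rg g = v <-> g = e \/ g = f) /\ sc e = rg e
                  /\ is_source (sc f))
  \/ (exists (w : vert E) e f, w <> v
        /\ (forall g, rg g = v <-> g = e) /\ sc e = w
        /\ (forall g, rg g = w <-> g = f) /\ sc f = v)
  \/ (~ out_finite v /\ is_source v)
  \/ (singular v /\ exists f, (forall g, rg g = v <-> g = f) /\ is_source (sc f))
  \/ (is_sink v /\ is_source v).

Inductive bpath :=
  | BFin : vert E -> list (edge E) -> bpath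
  | BInf : (nat -> edge E) -> bpath.

Definition in_bd (p : bpath) : Prop :=
  match p with
  | BFin v l => valid_path v l /\ singular (path_range v l)
  | BInf x => forall n, rg (x n) = sc (x (S n))
  end.

Definition len_ge (p : bpath) (m : nat) : Prop :=
  match p with
  | BFin _ l => m <= length l
  | BInf _ => True
  end.

Definition bshift (m : nat) (p : bpath) : bpath :=
  match p with
  | BFin v l => BFin (path_range v (firstn m l)) (skipn m l)
  | BInf x => BInf (fun n => x (n + m))
  end.

Definition extends (v : vert E) (l : list (edge E)) (p : bpath) : Prop :=
  match p with
  | BFin w l' => w = v /\ exists t, l' = l ++ t
  | BInf x => sc (x 0) = v /\
              forall i, i < length l -> nth_error l i = Some (x i)
  end.

Definition basic (v : vert E) (l : list (edge E)) (F : list (edge E))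
  (p : bpath) : Prop :=
  in_bd p /\ extends v l p /\ forall e, In e F -> ~ extends v (l ++ [e]) p.

Definition basic_ok (v : vert E) (l F : list (edge E)) : Prop :=
  valid_path v l /\ forall e, In e F -> sc e = path_range v l.

(* Subsets of the boundary path space are predicates on bpath, only their
   values on boundary paths matter. *)
Definition bd_open (U : bpath -> Prop) : Prop :=
  forall y, in_bd y -> U y ->
    exists v l F, basic_ok v l F /\ basic v l F y /\
      forall z, basic v l F z -> U z.

Definition bd_clopen (U : bpath -> Prop) : Prop :=
  bd_open U /\ bd_open (fun y => ~ U y).

Definition inG (g : bpath * Z * bpath) : Prop :=
  let '(x, k, y) := g in
  in_bd x /\ in_bd y /\
  exists m n : nat, len_ge x m /\ len_ge y n /\
    k = (Z.of_nat m - Z.of_nat n)%Z /\ bshift m x = bshift n y.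

Definition gr (g : bpath * Z * bpath) : bpath := fst (fst g).
Definition gs (g : bpath * Z * bpath) : bpath := snd g.

Definition Orb (x : bpath) (z : bpath) : Prop :=
  exists g, inG g /\ gs g = x /\ gr g = z.

End G.

(* (1) The boundary paths starting at a vertex v form a clopen set Z(v). If a cycle at v has
   no exit, Z(v) is a single point; if (T) fails at v, a path from v is determined by its
   range, so Z(v) meets every orbit at most once. Conversely, a basic open set
   Z(mu) \ U_{e in F} Z(mu e) contains mu e l1 z and mu e l2 z, where e is not in F (r(mu)
   is not a sink by (T)), l1 <> l2 are paths from r(e) to a common vertex (by (T)), and the
   tail z is chosen by (L) so that l1 z <> l2 z; these two points are tail equivalent.
   (2) Each kind of degenerate vertex carries a boundary path whose orbit has at most two
   points: {v}, {v, f}, {e^oo}, {e^oo, f e^oo} or the two shifts of (e f)^oo. Without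
   degenerate vertices, a finite boundary path with range u is equivalent to u, f and g
   (or h f) for edges f, g into u (h into s(f)); an infinite path x is equivalent to x,
   sigma x and sigma^2 x, which are distinct unless x is eventually a loop or 2-periodic,
   and then non-degeneracy supplies enough further edges entering the loop. *)
From Stdlib Require Import List ZArith.
From Stdlib Require Import Lia Classical FunctionalExtensionality ClassicalEpsilon.
Import ListNotations.

Arguments BFin {E} _ _.
Arguments BInf {E} _.
Arguments valid_path {E} _ _.
Arguments path_range {E} _ _.
Arguments out_finite {E} _.
Arguments is_sink {E} _.
Arguments is_source {E} _.
Arguments singular {E} _.
Arguments basic_ok {E} _ _ _.

Section BoundaryPaths.
Context {E : graph}.
Implicit Types (u v w : vert E) (e f : edge E) (l : list (edge E))
  (x y : nat -> edge E) (p q z : bpath E).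

(** * Concatenation and tail equivalence *)

Lemma valid_path_app v l m :
  valid_path v (l ++ m) <-> valid_path v l /\ valid_path (path_range v l) m.
Proof. revert v; induction l as [|e l IH]; intros v; simpl; [tauto | rewrite IH; tauto]. Qed.

Lemma path_range_app v l m : path_range v (l ++ m) = path_range (path_range v l) m.
Proof. revert v; induction l; simpl; auto. Qed.

Lemma path_range_snoc v l e : path_range v (l ++ [e]) = rg e.
Proof. now rewrite path_range_app. Qed.

Lemma path_into_source_nil w l : is_source (path_range w l) -> l = [].
Proof.
  induction l as [|e l _] using rev_ind; auto.
  rewrite path_range_snoc. intros Hs. destruct (Hs e eq_refl).
Qed.

Lemma rg_in_path w l e :
  valid_path w l -> In e l -> rg e = path_range w l \/ exists e', In e' l /\ sc e' = rg e.
Proof.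
  revert w; induction l as [|a l IH]; intros w Hl Hin; simpl in *; [tauto|].
  destruct Hl as [_ Hl], Hin as [<-|Hin].
  - destruct l as [|b l]; [left; reflexivity|].
    right. exists b. split; [simpl; auto | apply (proj1 Hl)].
  - destruct (IH _ Hl Hin) as [H|(e' & Hin' & He')]; [now left|].
    right. exists e'. auto.
Qed.

Lemma not_source_in_edge u : ~ is_source u -> exists e, rg e = u.
Proof. intros Hu. apply NNPP. intros Hno. apply Hu. intros e He. eauto. Qed.

Fixpoint prepend l y : nat -> edge E :=
  match l with
  | [] => y
  | a :: l' => fun n => match n with 0 => a | S n' => prepend l' y n' end
  end.

Lemma prepend_app l m y : prepend (l ++ m) y = prepend l (prepend m y).
Proof. induction l as [|a l IH]; simpl; [reflexivity | now rewrite IH]. Qed.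

Lemma prepend_add_length l y n : prepend l y (n + length l) = y n.
Proof.
  induction l as [|a l IH]; simpl; [f_equal; lia|].
  rewrite Nat.add_succ_r. apply IH.
Qed.

Lemma prepend_at_length l a m y : prepend (l ++ a :: m) y (length l) = a.
Proof. induction l; simpl; auto. Qed.

Lemma nth_error_prepend l y n : n < length l -> nth_error l n = Some (prepend l y n).
Proof.
  revert n; induction l as [|a l IH]; intros [|n] Hn; simpl in *; try lia; auto.
  apply IH. lia.
Qed.

Lemma prepend_eq_prefix {l1 l2 y} :
  prepend l1 y = prepend l2 y -> length l1 <= length l2 ->
  exists g, l2 = l1 ++ g /\ y = prepend g y.
Proof.
  revert l2; induction l1 as [|a l1 IH]; intros l2 H Hle; simpl in *; [eauto|].
  destruct l2 as [|b l2]; simpl in *; [lia|].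
  assert (a = b) as -> by exact (equal_f H 0).
  destruct (IH l2) as (g & -> & Hg); [|lia|eauto].
  apply functional_extensionality. intros n. exact (equal_f H (S n)).
Qed.

Definition start p : vert E :=
  match p with BFin w _ => w | BInf x => sc (x 0) end.

(* The path [(v, l) p]; the start vertex stored in a finite [p] is dropped, so the lemmas
   below assume [start p = path_range v l]. *)
Definition bconcat v l p : bpath E :=
  match p with
  | BFin _ m => BFin v (l ++ m)
  | BInf x => BInf (prepend l x)
  end.

Lemma start_bconcat v l z :
  valid_path v l -> start z = path_range v l -> start (bconcat v l z) = v.
Proof. destruct z, l; simpl; tauto. Qed.

Lemma in_bd_bconcat v l z :
  valid_path v l -> in_bd z -> start z = path_range v l -> in_bd (bconcat v l z).
Proof.
  destruct z as [w m|x]; simpl; intros Hl Hz Hs.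
  - destruct Hz as [Hm Hsing]. subst w. rewrite valid_path_app, path_range_app. auto.
  - revert v Hl Hs; induction l as [|a l IH]; intros v Hl Hs; simpl in *; auto.
    destruct Hl as [_ Hl]. intros [|n]; [|apply (IH _ Hl Hs)].
    symmetry. apply (start_bconcat _ _ (BInf x) Hl Hs).
Qed.

Lemma bshift_bconcat v l z :
  start z = path_range v l -> bshift (length l) (bconcat v l z) = z.
Proof.
  destruct z as [w m|x]; simpl; intros Hs.
  - rewrite firstn_app, skipn_app, firstn_all, skipn_all, Nat.sub_diag, app_nil_r.
    simpl. congruence.
  - f_equal. apply functional_extensionality. intros n. apply prepend_add_length.
Qed.

Lemma len_ge_bconcat v l z : len_ge (bconcat v l z) (length l).
Proof. destruct z; simpl; auto. rewrite length_app. lia. Qed.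

Lemma bconcat_eq_cases {v l1 l2 z} :
  bconcat v l1 z = bconcat v l2 z ->
  l1 = l2 \/ exists x, z = BInf x /\ prepend l1 x = prepend l2 x.
Proof.
  destruct z as [w m|x]; simpl; intros H; injection H as H.
  - left. exact (app_inv_tail _ _ _ H).
  - right. eauto.
Qed.

Lemma bconcat_app_cancel u v l l1 l2 z :
  bconcat v (l ++ l1) z = bconcat v (l ++ l2) z -> bconcat u l1 z = bconcat u l2 z.
Proof.
  destruct z as [w m|x]; simpl; intros H; injection H as H.
  - rewrite <- !app_assoc in H. now rewrite (app_inv_head _ _ _ H).
  - f_equal. apply functional_extensionality. intros n.
    pose proof (equal_f H (n + length l)) as Hn.
    now rewrite !prepend_app, !prepend_add_length in Hn.
Qed.

Lemma BInf_neq_at x y k : x k <> y k -> BInf x <> BInf y.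
Proof. intros H C. injection C as ->. auto. Qed.

Lemma Orb_intro p q m n :
  in_bd p -> in_bd q -> len_ge q m -> len_ge p n -> bshift m q = bshift n p -> Orb p q.
Proof.
  intros. exists (q, (Z.of_nat m - Z.of_nat n)%Z, p).
  repeat split; auto. exists m, n. auto.
Qed.

Lemma Orb_elim {p q} :
  Orb p q -> in_bd p /\ in_bd q /\
    exists m n, len_ge q m /\ len_ge p n /\ bshift m q = bshift n p.
Proof.
  intros [[[q' k] p'] [HG [Hs Hr]]]. unfold gs, gr in *; simpl in *. subst.
  destruct HG as (Hq & Hp & m & n & Hm & Hn & _ & Hmn). eauto 7.
Qed.

Lemma Orb_bconcat v l1 l2 z :
  valid_path v l1 -> valid_path v l2 -> in_bd z ->
  start z = path_range v l1 -> start z = path_range v l2 ->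
  Orb (bconcat v l1 z) (bconcat v l2 z).
Proof.
  intros. apply (Orb_intro _ _ (length l2) (length l1));
    auto using in_bd_bconcat, len_ge_bconcat.
  now rewrite !bshift_bconcat.
Qed.

Lemma Orb_BFin v l w m :
  in_bd (BFin v l) -> valid_path w m -> path_range w m = path_range v l ->
  Orb (BFin v l) (BFin w m).
Proof.
  intros [Hl Hsing] Hm Hr. apply (Orb_intro _ _ (length m) (length l)); simpl; auto.
  - rewrite Hr. auto.
  - rewrite !firstn_all, !skipn_all. congruence.
Qed.

Lemma Orb_BInf x y m n :
  in_bd (BInf x) -> in_bd (BInf y) -> (forall k, y (k + m) = x (k + n)) ->
  Orb (BInf x) (BInf y).
Proof.
  intros Hx Hy H. apply (Orb_intro _ _ m n); simpl; auto.
  f_equal. apply functional_extensionality. exact H.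
Qed.

Lemma Orb_BInf_inv {x q} :
  Orb (BInf x) q ->
  exists y m n, q = BInf y /\ in_bd (BInf y) /\ forall k, y (k + m) = x (k + n).
Proof.
  intros (_ & Hq & m & n & _ & _ & H) % Orb_elim.
  destruct q as [w l|y]; simpl in H; [discriminate|].
  injection H as H. exists y, m, n. split; auto. split; auto. exact (equal_f H).
Qed.

Lemma Orb_vertex_inv {v q} :
  Orb (BFin v []) q -> exists w m, q = BFin w m /\ valid_path w m /\ path_range w m = v.
Proof.
  intros (_ & Hq & m & n & _ & Hn & H) % Orb_elim.
  simpl in Hn. replace n with 0 in H by lia.
  destruct q as [w l|y]; simpl in H; [|discriminate].
  injection H as Hr Hl.
  assert (length l <= m) by (pose proof (length_skipn m l); rewrite Hl in *; simpl in *; lia).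
  rewrite firstn_all2 in Hr by auto.
  exists w, l. split; auto. split; auto. apply Hq.
Qed.

Lemma infinite_path_from (P : vert E -> Prop) :
  (forall u, P u -> exists e, sc e = u /\ P (rg e)) ->
  forall w, P w -> exists x, in_bd (BInf x) /\ sc (x 0) = w.
Proof.
  intros Hstep w Hw. destruct (Hstep w Hw) as [e0 _].
  destruct (choice (fun u e => P u -> sc e = u /\ P (rg e))) as [next Hnext].
  { intros u. destruct (classic (P u)) as [Hu|Hu].
    - destruct (Hstep u Hu) as [e He]. exists e. auto.
    - exists e0. tauto. }
  set (V := fun k => Nat.iter k (fun u => rg (next u)) w).
  assert (HV : forall k, P (V k)) by (induction k; [exact Hw | apply (Hnext _ IHk)]).
  exists (fun k => next (V k)). split.
  - intros n. symmetry. exact (proj1 (Hnext _ (HV (S n)))).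
  - exact (proj1 (Hnext _ Hw)).
Qed.

Lemma boundary_path_from w : exists z, in_bd z /\ start z = w.
Proof.
  destruct (classic (exists l, valid_path w l /\ singular (path_range w l)))
    as [[l Hl]|Hno].
  - exists (BFin w l). simpl. auto.
  - destruct (infinite_path_from
      (fun u => exists l, valid_path w l /\ path_range w l = u)) with w as [x Hx].
    + intros u (l & Hl & <-).
      destruct (classic (exists e, sc e = path_range w l)) as [[e He]|Hsink].
      * exists e. split; auto. exists (l ++ [e]).
        rewrite valid_path_app, path_range_snoc. simpl. auto.
      * exfalso. apply Hno. exists l. split; auto. left. intros e He. eauto.
    + exists []. simpl. auto.
    + exists (BInf x). exact Hx.
Qed.

Definition bprefix (m : nat) p : list (edge E) :=
  match p with BFin _ l => firstn m l | BInf x => map x (seq 0 m) end.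

Lemma valid_path_map_seq x m j :
  in_bd (BInf x) ->
  valid_path (sc (x j)) (map x (seq j m)) /\
  path_range (sc (x j)) (map x (seq j m)) = sc (x (j + m)).
Proof.
  intros Hx. revert j; induction m as [|m IH]; intros j; simpl.
  - now rewrite Nat.add_0_r.
  - destruct (IH (S j)) as [Hv Hr]. rewrite Hx, Nat.add_succ_r. auto.
Qed.

Lemma bprefix_valid {p m} :
  in_bd p -> len_ge p m ->
  valid_path (start p) (bprefix m p) /\
  path_range (start p) (bprefix m p) = start (bshift m p).
Proof.
  destruct p as [v l|x]; simpl; intros Hp Hm.
  - destruct Hp as [Hl _]. rewrite <- (firstn_skipn m l), valid_path_app in Hl. tauto.
  - exact (valid_path_map_seq x m 0 Hp).
Qed.

Lemma prepend_map_seq x m j y :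
  (forall k, y k = x (k + (j + m))) -> forall n, prepend (map x (seq j m)) y n = x (j + n).
Proof.
  revert j; induction m as [|m IH]; intros j Hy [|n]; simpl;
    rewrite ?Hy; try (f_equal; lia).
  rewrite IH; [f_equal; lia|]. intros k. rewrite Hy. f_equal. lia.
Qed.

Lemma bconcat_bprefix_bshift p m : bconcat (start p) (bprefix m p) (bshift m p) = p.
Proof.
  destruct p as [v l|x]; simpl.
  - now rewrite firstn_skipn.
  - f_equal. apply functional_extensionality. apply prepend_map_seq. intros k. reflexivity.
Qed.

(** * Conditions (L) and (T) *)

Lemma extends_nil v p : extends v [] p <-> start p = v.
Proof.
  destruct p; simpl; split; try tauto; [eauto|].
  intros; split; auto. simpl. lia.
Qed.

Lemma start_clopen v : bd_clopen (fun p => start p = v).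
Proof.
  assert (Hnbhd : forall p, in_bd p ->
    basic_ok (start p) [] [] /\ basic (start p) [] [] p /\
    forall q, basic (start p) [] [] q -> start q = start p).
  { intros p Hp. split; [split; simpl; [auto | intros e []]|]. split.
    - split; [auto | split; [apply extends_nil; reflexivity | intros e []]].
    - intros q (_ & Hq & _). apply extends_nil, Hq. }
  split; intros p Hp Hv; destruct (Hnbhd p Hp) as (Hok & Hb & Hq);
    exists (start p), [], []; (split; [exact Hok|]); (split; [exact Hb|]);
    intros q Hbq; now rewrite (Hq q Hbq).
Qed.

Lemma boundary_path_unique (D : vert E -> Prop) :
  (forall u, D u -> exists e, sc e = u /\ D (rg e) /\ forall e', sc e' = u -> e' = e) ->
  forall p q, in_bd p -> in_bd q -> D (start p) -> start p = start q -> p = q.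
Proof.
  intros HD.
  assert (Hreach : forall l u, D u -> valid_path u l -> D (path_range u l)).
  { induction l as [|a l IH]; intros u Du Hl; simpl in *; auto.
    destruct Hl as [Ha Hl]. destruct (HD u Du) as (e & _ & De & Hu).
    apply IH; auto. now rewrite (Hu a Ha). }
  assert (Hinf : forall p, in_bd p -> D (start p) -> exists x, p = BInf x).
  { intros [w l|x] Hp Dp; [exfalso|eauto].
    destruct Hp as [Hl [Hsink|Hinf]]; destruct (HD _ (Hreach l w Dp Hl)) as (e & He & _ & Hu).
    - exact (Hsink e He).
    - apply Hinf. exists [e]. intros e' He'. left. symmetry. auto. }
  intros p q Hp Hq Dp Hpq.
  destruct (Hinf p Hp Dp) as [x ->]. destruct (Hinf q Hq) as [y ->]; [congruence|].
  simpl in *. f_equal. apply functional_extensionality.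
  assert (Hxy : forall k, x k = y k /\ D (sc (x k))).
  { induction k as [|k [IH1 IH2]]; [destruct (HD _ Dp) as (e & _ & _ & Hu)|
                                    destruct (HD _ IH2) as (e0 & _ & De & Hu0);
                                    destruct (HD _ De) as (e & _ & _ & Hu)].
    - split; auto. rewrite (Hu (x 0)), (Hu (y 0)); auto.
    - assert (Hsx : sc (x (S k)) = rg e0) by (rewrite <- Hp; f_equal; auto).
      assert (Hsy : sc (y (S k)) = rg e0) by (rewrite <- Hq, <- IH1; f_equal; auto).
      rewrite Hsx. split; auto. rewrite (Hu _ Hsx), (Hu _ Hsy). reflexivity. }
  intros k. apply Hxy.
Qed.

Lemma no_exit_cycle_boundary_path_unique v l :
  l <> [] -> valid_path v l -> path_range v l = v ->
  (forall ei e, In ei l -> sc e = sc ei -> e = ei) ->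
  forall p q, in_bd p -> in_bd q -> start p = v -> start q = v -> p = q.
Proof.
  intros Hne Hl Hr Hnoexit p q Hp Hq Sp Sq.
  destruct l as [|a l']; [contradiction|].
  apply (boundary_path_unique (fun u => exists ei, In ei (a :: l') /\ sc ei = u));
    auto; [|exists a; simpl; split; [auto | rewrite Sp; apply Hl] | congruence].
  intros u (ei & Hin & <-). exists ei. split; auto. split.
  - destruct (rg_in_path v _ ei Hl Hin) as [Hrg|Hrg]; auto.
    exists a. simpl. split; auto. rewrite Hrg, Hr. apply Hl.
  - intros e' He'. exact (Hnoexit ei e' Hin He').
Qed.

Lemma Orb_eq_of_unique_paths v :
  (forall l1 l2, valid_path v l1 -> valid_path v l2 ->
     path_range v l1 = path_range v l2 -> l1 = l2) ->
  forall p q, start p = v -> start q = v -> Orb p q -> p = q.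
Proof.
  intros Huniq p q Sp Sq Hpq.
  destruct (Orb_elim Hpq) as (Hp & Hq & m & n & Hm & Hn & Hshift).
  destruct (bprefix_valid Hq Hm) as [Vq Rq]. destruct (bprefix_valid Hp Hn) as [Vp Rp].
  rewrite <- (bconcat_bprefix_bshift p n), <- (bconcat_bprefix_bshift q m).
  rewrite Sp, Sq in *. rewrite Hshift, (Huniq (bprefix n p) (bprefix m q)); auto.
  congruence.
Qed.

Lemma condL_condT_of_clopen_orbits :
  (forall U : bpath E -> Prop, bd_clopen U -> (exists p, in_bd p /\ U p) ->
     exists p q, in_bd p /\ U p /\ U q /\ p <> q /\ Orb p q) ->
  condL E /\ condT E.
Proof.
  intros H.
  assert (Hpair : forall v, exists p q, start p = v /\ start q = v /\ p <> q /\ Orb p q).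
  { intros v. destruct (boundary_path_from v) as [z Hz].
    destruct (H _ (start_clopen v) (ex_intro _ z Hz)) as (p & q & _ & Hp & Hq & Hpq & Horb).
    eauto 6. }
  split.
  - intros v l Hne Hl Hr. apply NNPP. intros Hexit.
    destruct (Hpair v) as (p & q & Sp & Sq & Hpq & Horb). apply Hpq.
    destruct (Orb_elim Horb) as (Hp & Hq & _).
    apply (no_exit_cycle_boundary_path_unique v l); auto.
    intros ei e Hin Hs. apply NNPP. intros Hne'. apply Hexit.
    destruct (In_nth_error _ _ Hin) as [i Hi]. exists i, ei, e. auto.
  - intros v. apply NNPP. intros HnT.
    destruct (Hpair v) as (p & q & Sp & Sq & Hpq & Horb). apply Hpq.
    apply (Orb_eq_of_unique_paths v); auto.
    intros l1 l2 H1 H2 H12. apply NNPP. intros Hne. apply HnT.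
    exists (path_range v l1), l1, l2. auto.
Qed.

Lemma condT_not_sink (HT : condT E) u : ~ is_sink u.
Proof.
  intros Hs. destruct (HT u) as (w & l1 & l2 & V1 & V2 & _ & _ & Hne). apply Hne.
  assert (Hnil : forall l, valid_path u l -> l = []).
  { intros [|a l] Hl; [reflexivity | destruct (Hs a (proj1 Hl))]. }
  now rewrite (Hnil l1), (Hnil l2).
Qed.

Lemma extends_BInf_prefix {v l x} : extends v l (BInf x) -> l = map x (seq 0 (length l)).
Proof.
  intros [_ H]. apply nth_error_ext. intros n. rewrite nth_error_map, nth_error_seq.
  destruct (Nat.ltb_spec n (length l)) as [Hn|Hn]; simpl.
  - apply H, Hn.
  - apply nth_error_None, Hn.
Qed.

Lemma basic_exit_edge (HT : condT E) {v l F p} :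
  basic v l F p -> exists e, sc e = path_range v l /\ ~ In e F.
Proof.
  intros (Hp & Hext & Hout). destruct p as [w m|x]; simpl in Hp, Hext.
  - destruct Hext as [-> [[|e t] ->]].
    + rewrite app_nil_r in Hp. destruct Hp as [_ [Hsink|Hinf]].
      * destruct (condT_not_sink HT _ Hsink).
      * apply NNPP. intros Hall. apply Hinf. exists F. intros e He.
        apply NNPP. intros HeF. apply Hall. eauto.
    + exists e. split.
      * destruct Hp as [Hp _]. apply valid_path_app in Hp. apply Hp.
      * intros HeF. apply (Hout e HeF). split; auto. exists t. now rewrite <- app_assoc.
  - exists (x (length l)). split.
    + destruct (valid_path_map_seq x (length l) 0 Hp) as [_ Hr].
      rewrite <- (extends_BInf_prefix Hext), (proj1 Hext) in Hr. auto.
    + intros HeF. apply (Hout _ HeF). split; [apply Hext|].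
      intros i Hi. rewrite length_app in Hi. simpl in Hi.
      destruct (Nat.lt_ge_cases i (length l)).
      * rewrite nth_error_app1 by auto. apply Hext; auto.
      * replace i with (length l) by lia. now rewrite nth_error_app2, Nat.sub_diag by lia.
Qed.

Lemma bconcat_in_basic v l e t F z :
  valid_path v (l ++ e :: t) -> in_bd z -> start z = path_range v (l ++ e :: t) ->
  ~ In e F -> basic v l F (bconcat v (l ++ e :: t) z).
Proof.
  intros Hl Hz Sz HeF. split; [apply in_bd_bconcat; auto|].
  destruct z as [w m|x]; simpl.
  - split; [split; auto; exists (e :: t ++ m); now rewrite <- app_assoc|].
    intros f Hf [_ [t' Ht]]. rewrite <- !app_assoc in Ht. apply app_inv_head in Ht.
    injection Ht as ->. contradiction.
  - split; [split|].
    + exact (start_bconcat _ _ (BInf x) Hl Sz).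
    + intros i Hi. rewrite prepend_app. apply nth_error_prepend, Hi.
    + intros f Hf [_ Hext]. specialize (Hext (length l)).
      rewrite length_app, nth_error_app2, Nat.sub_diag, prepend_at_length in Hext by lia.
      simpl in Hext. injection (Hext ltac:(lia)) as ->. contradiction.
Qed.

Lemma cycle_exit_escape (HL : condL E) w g :
  g <> [] -> valid_path w g -> path_range w g = w ->
  exists z, in_bd z /\ start z = w /\ forall x, z = BInf x -> x <> prepend g x.
Proof.
  intros Hne Hg Hr.
  destruct (HL w g Hne Hg Hr) as (i & gi & f & Hi & Hf & Hfg).
  destruct (nth_error_split g i Hi) as (A & B & -> & _).
  apply valid_path_app in Hg. destruct Hg as [HA [Hgi _]].
  destruct (boundary_path_from (rg f)) as (z & Hz & Sz).
  assert (HAf : valid_path w (A ++ [f]))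
    by (apply valid_path_app; simpl; split; [auto | split; [congruence | exact I]]).
  assert (Szf : start z = path_range w (A ++ [f])) by now rewrite path_range_snoc.
  exists (bconcat w (A ++ [f]) z). split; [apply in_bd_bconcat; auto|].
  split; [apply start_bconcat; auto|].
  intros x Hx Hper. destruct z as [? ?|y]; simpl in Hx; [discriminate|].
  injection Hx as <-. apply Hfg.
  pose proof (equal_f Hper (length A)) as H. now rewrite !prepend_at_length in H.
Qed.

(* [l1 z = l2 z] forces [l2 = l1 ++ g] and [z = g z], i.e. [z] is the cycle [g] repeated
   forever; by (L) the tail can leave [g] through an exit. *)
Lemma separating_tail_le (HL : condL E) u w l1 l2 :
  valid_path u l1 -> valid_path u l2 -> path_range u l1 = w -> path_range u l2 = w ->
  l1 <> l2 -> length l1 <= length l2 ->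
  exists z, in_bd z /\ start z = w /\ bconcat u l1 z <> bconcat u l2 z.
Proof.
  intros V1 V2 R1 R2 Hne Hle.
  destruct (classic (exists g, l2 = l1 ++ g)) as [[g ->]|Hnp].
  - assert (g <> []) by (intros ->; apply Hne; now rewrite app_nil_r).
    rewrite valid_path_app, R1 in V2. rewrite path_range_app, R1 in R2.
    destruct (cycle_exit_escape HL w g) as (z & Hz & Sz & Hesc); try tauto.
    exists z. split; auto. split; auto. intros Heq.
    destruct (bconcat_eq_cases Heq) as [C|(x & -> & Hx)]; [contradiction|].
    destruct (prepend_eq_prefix Hx Hle) as (g' & Hg' & Hxg).
    apply app_inv_head in Hg'. subst g'. exact (Hesc x eq_refl Hxg).
  - destruct (boundary_path_from w) as (z & Hz & Sz).
    exists z. split; auto. split; auto. intros Heq.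
    destruct (bconcat_eq_cases Heq) as [C|(x & -> & Hx)]; [contradiction|].
    destruct (prepend_eq_prefix Hx Hle) as (g & Hg & _). eauto.
Qed.

Lemma separating_tail (HL : condL E) {u w l1 l2} :
  valid_path u l1 -> valid_path u l2 -> path_range u l1 = w -> path_range u l2 = w ->
  l1 <> l2 -> exists z, in_bd z /\ start z = w /\ bconcat u l1 z <> bconcat u l2 z.
Proof.
  intros V1 V2 R1 R2 Hne.
  destruct (Nat.le_ge_cases (length l1) (length l2)).
  - apply separating_tail_le; auto.
  - destruct (separating_tail_le HL u w l2 l1) as (z & Hz & Sz & Hsep); auto.
    exists z. auto.
Qed.

Lemma clopen_orbits_of_condL_condT (HL : condL E) (HT : condT E) U :
  bd_clopen U -> (exists p, in_bd p /\ U p) ->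
  exists p q, in_bd p /\ U p /\ U q /\ p <> q /\ Orb p q.
Proof.
  intros [HUo _] (p0 & Hp0 & HUp0).
  destruct (HUo p0 Hp0 HUp0) as (v & l & F & [Hl _] & Hb & HU).
  destruct (basic_exit_edge HT Hb) as (e & He & HeF).
  destruct (HT (rg e)) as (w & l1 & l2 & V1 & V2 & R1 & R2 & Hne).
  destruct (separating_tail HL V1 V2 R1 R2 Hne) as (z & Hz & Sz & Hsep).
  assert (Hext : forall li, valid_path (rg e) li -> path_range (rg e) li = w ->
    valid_path v (l ++ e :: li) /\ start z = path_range v (l ++ e :: li)).
  { intros li Vi Ri. rewrite valid_path_app, path_range_app. simpl. split; [auto | congruence]. }
  destruct (Hext l1 V1 R1) as [W1 S1]. destruct (Hext l2 V2 R2) as [W2 S2].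
  exists (bconcat v (l ++ e :: l1) z), (bconcat v (l ++ e :: l2) z).
  split; [apply in_bd_bconcat; auto|].
  split; [apply HU, bconcat_in_basic; auto|]. split; [apply HU, bconcat_in_basic; auto|].
  split; [|apply Orb_bconcat; auto].
  intros C. apply Hsep. apply (bconcat_app_cancel (rg e) v (l ++ [e])).
  now rewrite <- !app_assoc.
Qed.

(** * Orbits with three points *)

Definition three_in_orbit p : Prop :=
  exists a b c, Orb p a /\ Orb p b /\ Orb p c /\ a <> b /\ a <> c /\ b <> c.

Lemma not_three_in_orbit_of_pair p a b :
  (forall q, Orb p q -> q = a \/ q = b) -> ~ three_in_orbit p.
Proof.
  intros H (q1 & q2 & q3 & H1 & H2 & H3 & N12 & N13 & N23).
  destruct (H _ H1) as [->| ->], (H _ H2) as [->| ->], (H _ H3) as [->| ->]; congruence.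
Qed.

Lemma nat_ind_down (P : nat -> Prop) n :
  (forall j, n <= j -> P j) -> (forall j, P (S j) -> P j) -> forall j, P j.
Proof.
  intros Hge Hstep j.
  assert (Hd : forall d j, n <= j + d -> P j).
  { induction d as [|d IH]; intros i Hi; [apply Hge; lia | apply Hstep, IH; lia]. }
  apply (Hd n). lia.
Qed.

Lemma Orb_BInf_backward_closed (P : edge E -> Prop) x q :
  (forall k, P (x k)) -> (forall a b, P b -> rg a = sc b -> P a) -> Orb (BInf x) q ->
  exists y, q = BInf y /\ in_bd (BInf y) /\ forall j, P (y j).
Proof.
  intros Hx Hpred Hq. destruct (Orb_BInf_inv Hq) as (y & m & n & -> & Hy & Hyx).
  exists y. split; auto. split; auto.
  apply (nat_ind_down (fun j => P (y j)) m).
  - intros j Hj. replace j with (j - m + m) by lia. rewrite Hyx. apply Hx.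
  - intros j Hj. exact (Hpred _ _ Hj (Hy j)).
Qed.

Lemma BInf_eq_of_source_determined (P : edge E -> Prop) x y :
  in_bd (BInf x) -> in_bd (BInf y) -> (forall j, P (x j)) -> (forall j, P (y j)) ->
  (forall a b, P a -> P b -> sc a = sc b -> a = b) -> x 0 = y 0 -> x = y.
Proof.
  intros Hx Hy Px Py Huniq H0. apply functional_extensionality.
  induction x0 as [|k IH]; auto.
  apply Huniq; auto. rewrite <- Hx, <- Hy. congruence.
Qed.

Definition alternating e f : nat -> edge E := fun k => if Nat.even k then e else f.

Lemma alternating_in_bd e f : rg e = sc f -> rg f = sc e -> in_bd (BInf (alternating e f)).
Proof.
  intros Hef Hfe n. unfold alternating.
  rewrite Nat.even_succ, <- Nat.negb_even. destruct (Nat.even n); auto.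
Qed.

Lemma sole_loop_orbit v e :
  (forall g, rg g = v <-> g = e) -> sc e = rg e ->
  forall q, Orb (BInf (fun _ => e)) q -> q = BInf (fun _ => e).
Proof.
  intros Hin Hloop q Hq.
  assert (Hpred : forall a b, b = e -> rg a = sc b -> a = e).
  { intros a b -> Hab. apply Hin. rewrite Hab, Hloop. apply Hin. reflexivity. }
  destruct (Orb_BInf_backward_closed _ _ _ (fun _ => eq_refl) Hpred Hq) as (y & -> & _ & Hy).
  f_equal. apply functional_extensionality. exact Hy.
Qed.

Lemma loop_and_source_orbit v e f :
  (forall g, rg g = v <-> g = e \/ g = f) -> sc e = rg e -> is_source (sc f) ->
  forall q, Orb (BInf (fun _ => e)) q ->
    q = BInf (fun _ => e) \/ q = BInf (prepend [f] (fun _ => e)).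
Proof.
  intros Hin Hloop Hsrc q Hq.
  assert (Hpred : forall a b, b = e \/ b = f -> rg a = sc b -> a = e \/ a = f).
  { intros a b [-> | ->] Hab; [apply Hin; rewrite Hab, Hloop; apply Hin; auto|].
    destruct (Hsrc a Hab). }
  destruct (Orb_BInf_backward_closed _ _ _ (fun _ => or_introl eq_refl) Hpred Hq)
    as (y & -> & Hy & Hef).
  assert (Htail : forall j, y (S j) = e).
  { intros j. destruct (Hef (S j)) as [He|Hf]; auto. destruct (Hsrc (y j)). now rewrite Hy, Hf. }
  destruct (Hef 0) as [H0|H0]; [left|right]; f_equal; apply functional_extensionality;
    intros [|j]; simpl; auto.
Qed.

Lemma two_cycle_orbit v w e f :
  w <> v -> (forall g, rg g = v <-> g = e) -> sc e = w ->
  (forall g, rg g = w <-> g = f) -> sc f = v ->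
  forall q, Orb (BInf (alternating e f)) q ->
    q = BInf (alternating e f) \/ q = BInf (alternating f e).
Proof.
  intros Hwv Hv He Hw Hf q Hq.
  assert (Hre : rg e = v) by (apply Hv; auto). assert (Hrf : rg f = w) by (apply Hw; auto).
  set (P := fun g => g = e \/ g = f).
  assert (Palt : forall a b j, P a -> P b -> P (alternating a b j))
    by (intros a b j Ha Hb; unfold alternating; destruct (Nat.even j); auto).
  assert (Hpred : forall a b, P b -> rg a = sc b -> P a).
  { intros a b [-> | ->] Hab; [right; apply Hw | left; apply Hv]; congruence. }
  assert (Huniq : forall a b, P a -> P b -> sc a = sc b -> a = b).
  { intros a b [-> | ->] [-> | ->]; congruence. }
  assert (Px : forall j, P (alternating e f j)) by (intros j; apply Palt; unfold P; auto).
  destruct (Orb_BInf_backward_closed P _ _ Px Hpred Hq) as (y & -> & Hy & Py).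
  assert (Halt : forall a b, P a -> P b -> rg a = sc b -> rg b = sc a -> y 0 = a ->
                  y = alternating a b).
  { intros a b Pa Pb Hab Hba H0. apply (BInf_eq_of_source_determined P);
      [exact Hy | apply alternating_in_bd; auto | exact Py | intros j; apply Palt; auto
      | exact Huniq | exact H0]. }
  destruct (Py 0) as [H0|H0]; [left|right]; f_equal; apply Halt; unfold P; auto; congruence.
Qed.

Lemma source_vertex_orbit v :
  is_source v -> forall q, Orb (BFin v []) q -> q = BFin v [].
Proof.
  intros Hs q Hq. destruct (Orb_vertex_inv Hq) as (w & m & -> & _ & Hr).
  rewrite <- Hr in Hs. rewrite (path_into_source_nil w m Hs) in *. simpl in Hr. now subst.
Qed.

Lemma sole_in_edge_from_source_orbit v f :
  (forall g, rg g = v <-> g = f) -> is_source (sc f) ->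
  forall q, Orb (BFin v []) q -> q = BFin v [] \/ q = BFin (sc f) [f].
Proof.
  intros Hin Hs q Hq. destruct (Orb_vertex_inv Hq) as (w & m & -> & Hm & Hr).
  induction m as [|g m _] using rev_ind; [left; simpl in Hr; now subst|].
  right. rewrite path_range_snoc in Hr. apply Hin in Hr. subst g.
  apply valid_path_app in Hm. destruct Hm as [_ [Hf _]]. rewrite Hf in Hs.
  rewrite (path_into_source_nil w m Hs) in *. simpl in Hf. now subst.
Qed.

Lemma degenerate_not_three_in_orbit v :
  degenerate E v -> exists p, in_bd p /\ ~ three_in_orbit p.
Proof.
  intros [(e & Hin & Hloop)|[(e & f & Hin & Hloop & Hsrc)|[(w & e & f & Hwv & Hv & He & Hw & Hf)|
         [[Hinf Hsrc]|[[Hsing (f & Hin & Hsrc)]|[Hsink Hsrc]]]]]].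
  - exists (BInf (fun _ => e)). split; [intros n; simpl; auto|].
    apply (not_three_in_orbit_of_pair _ (BInf (fun _ => e)) (BInf (fun _ => e))).
    intros q Hq. left. exact (sole_loop_orbit v e Hin Hloop q Hq).
  - exists (BInf (fun _ => e)). split; [intros n; simpl; auto|].
    exact (not_three_in_orbit_of_pair _ _ _ (loop_and_source_orbit v e f Hin Hloop Hsrc)).
  - exists (BInf (alternating e f)).
    split; [apply alternating_in_bd; [rewrite Hf; apply Hv | rewrite He; apply Hw]; reflexivity|].
    exact (not_three_in_orbit_of_pair _ _ _ (two_cycle_orbit v w e f Hwv Hv He Hw Hf)).
  - exists (BFin v []). split; [split; [exact I | now right]|].
    apply (not_three_in_orbit_of_pair _ (BFin v []) (BFin v [])).
    intros q Hq. left. exact (source_vertex_orbit v Hsrc q Hq).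
  - exists (BFin v []). split; [split; [exact I | exact Hsing]|].
    exact (not_three_in_orbit_of_pair _ _ _ (sole_in_edge_from_source_orbit v f Hin Hsrc)).
  - exists (BFin v []). split; [split; [exact I | now left]|].
    apply (not_three_in_orbit_of_pair _ (BFin v []) (BFin v [])).
    intros q Hq. left. exact (source_vertex_orbit v Hsrc q Hq).
Qed.

Lemma Orb_BInf_bconcat x n w l :
  in_bd (BInf x) -> valid_path w l -> path_range w l = sc (x n) ->
  Orb (BInf x) (bconcat w l (bshift n (BInf x))).
Proof.
  intros Hx Hl Hr. apply (Orb_BInf _ _ (length l) n); auto.
  - apply (in_bd_bconcat w l (bshift n (BInf x))); simpl; auto.
  - intros k. now rewrite prepend_add_length.
Qed.

Lemma BFin_three_in_orbit (HD : forall v, ~ degenerate E v) v l :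
  in_bd (BFin v l) -> three_in_orbit (BFin v l).
Proof.
  intros Hp. assert (Hu : singular (path_range v l)) by apply Hp.
  assert (Horb : forall w m, valid_path w m -> path_range w m = path_range v l ->
                   Orb (BFin v l) (BFin w m)) by (intros; apply Orb_BFin; auto).
  destruct (not_source_in_edge (path_range v l)) as [f Hf].
  { intros Hs. apply (HD (path_range v l)). do 3 right.
    destruct Hu as [Hsink|Hinf]; [do 2 right | left]; auto. }
  destruct (classic (exists g, rg g = path_range v l /\ g <> f)) as [(g & Hg & Hgf)|Hsole].
  - exists (BFin (path_range v l) []), (BFin (sc f) [f]), (BFin (sc g) [g]).
    split; [apply Horb; simpl; auto|]. split; [apply Horb; simpl; auto|].
    split; [apply Horb; simpl; auto|]. split; [discriminate|]. split; [discriminate|].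
    congruence.
  - destruct (not_source_in_edge (sc f)) as [h Hh].
    { intros Hs. apply (HD (path_range v l)). do 4 right. left. split; auto.
      exists f. split; auto. intros g.
      split; [intros Hg; apply NNPP; intros Hgf; apply Hsole; eauto | intros ->; auto]. }
    exists (BFin (path_range v l) []), (BFin (sc f) [f]), (BFin (sc h) [h; f]).
    split; [apply Horb; simpl; auto|]. split; [apply Horb; simpl; auto|].
    split; [apply Horb; simpl; auto|]. repeat split; discriminate.
Qed.

Lemma eventual_loop_three_in_orbit (HD : forall v, ~ degenerate E v) x e :
  in_bd (BInf x) -> (forall k, x (S k) = e) -> three_in_orbit (BInf x).
Proof.
  intros Hx He.
  assert (Hloop : sc e = rg e) by (pose proof (Hx 1) as H; rewrite !He in H; auto).
  assert (Horb : forall w l, valid_path w l -> path_range w l = sc e ->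
                   Orb (BInf x) (bconcat w l (bshift 1 (BInf x))))
    by (intros; apply Orb_BInf_bconcat; rewrite ?He; auto).
  destruct (classic (exists g, rg g = sc e /\ g <> e)) as [(g & Hg & Hge)|Hsole].
  2: { destruct (HD (sc e)). left. exists e. split; auto. intros g.
       split; [intros Hg; apply NNPP; eauto | intros ->; auto]. }
  destruct (classic (exists h, rg h = sc e /\ h <> e /\ h <> g)) as [(h & Hh & Hhe & Hhg)|Hpair].
  - exists (bconcat (sc e) [] (bshift 1 (BInf x))), (bconcat (sc g) [g] (bshift 1 (BInf x))),
      (bconcat (sc h) [h] (bshift 1 (BInf x))).
    repeat split; try apply Horb; simpl; auto;
      apply (BInf_neq_at _ _ 0); simpl; rewrite ?He; congruence.
  - destruct (not_source_in_edge (sc g)) as [h Hh].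
    { intros Hs. apply (HD (sc e)). right; left. exists e, g. repeat split; auto.
      - intros Hh. destruct (classic (g0 = e)); auto. right.
        apply NNPP. intros Hng. apply Hpair. eauto.
      - intros [-> | ->]; auto. }
    exists (bconcat (sc e) [] (bshift 1 (BInf x))), (bconcat (sc g) [g] (bshift 1 (BInf x))),
      (bconcat (sc h) [h; g] (bshift 1 (BInf x))).
    repeat split; try apply Horb; simpl; auto;
      [apply (BInf_neq_at _ _ 0) | apply (BInf_neq_at _ _ 1) | apply (BInf_neq_at _ _ 1)];
      simpl; rewrite ?He; congruence.
Qed.

Lemma period_two_three_in_orbit (HD : forall v, ~ degenerate E v) x :
  in_bd (BInf x) -> x 0 <> x 1 -> (forall k, x (S (S k)) = x k) -> three_in_orbit (BInf x).
Proof.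
  intros Hx Hab Hper.
  assert (Hra : rg (x 0) = sc (x 1)) by apply Hx.
  assert (Hrb : rg (x 1) = sc (x 0)) by (rewrite Hx, (Hper 0); reflexivity).
  assert (Hx0 := Orb_BInf_bconcat x 0 (sc (x 0)) [] Hx I eq_refl).
  assert (Hx1 := Orb_BInf_bconcat x 1 (sc (x 1)) [] Hx I eq_refl).
  destruct (classic (exists g, rg g = sc (x 0) /\ g <> x 1)) as [(g & Hg & Hgb)|Hv].
  { exists (bshift 0 (BInf x)), (bshift 1 (BInf x)), (bconcat (sc g) [g] (bshift 0 (BInf x))).
    repeat split; auto; [apply Orb_BInf_bconcat; simpl; auto | ..];
      [apply (BInf_neq_at _ _ 0) | apply (BInf_neq_at _ _ 1) | apply (BInf_neq_at _ _ 0)];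
      simpl; congruence. }
  destruct (classic (exists g, rg g = sc (x 1) /\ g <> x 0)) as [(g & Hg & Hga)|Hw].
  { exists (bshift 0 (BInf x)), (bshift 1 (BInf x)), (bconcat (sc g) [g] (bshift 1 (BInf x))).
    repeat split; auto; [apply Orb_BInf_bconcat; simpl; auto | ..];
      [apply (BInf_neq_at _ _ 0) | apply (BInf_neq_at _ _ 0) | apply (BInf_neq_at _ _ 1)];
      simpl; rewrite ?Hper; congruence. }
  destruct (HD (sc (x 0))). right; right; left.
  exists (sc (x 1)), (x 1), (x 0). repeat split.
  - intros Heq. apply Hv. exists (x 0). split; congruence.
  - intros Hg. apply NNPP. intros Hne. apply Hv. eauto.
  - intros ->. exact Hrb.
  - intros Hg. apply NNPP. intros Hne. apply Hw. eauto.
  - intros ->. exact Hra.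
Qed.

Lemma BInf_three_in_orbit (HD : forall v, ~ degenerate E v) x :
  in_bd (BInf x) -> three_in_orbit (BInf x).
Proof.
  intros Hx.
  destruct (classic (forall k, x (S (S k)) = x (S k))) as [Hconst|Hnc].
  { apply (eventual_loop_three_in_orbit HD x (x 1) Hx).
    induction k as [|k IH]; [reflexivity | now rewrite Hconst]. }
  destruct (classic (forall k, x (S (S k)) = x k)) as [Hper|Hnp].
  { apply period_two_three_in_orbit; auto. intros H01. apply Hnc.
    assert (Hk : forall k, x k = x 0 /\ x (S k) = x 0).
    { intros k. induction k as [|k [IH1 IH2]]; [auto | now rewrite Hper]. }
    intros k. now rewrite (proj2 (Hk k)), (proj2 (Hk (S k))). }
  apply not_all_ex_not in Hnc as [k1 Hk1]. apply not_all_ex_not in Hnp as [k2 Hk2].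
  exists (bshift 0 (BInf x)), (bshift 1 (BInf x)), (bshift 2 (BInf x)).
  repeat split; try exact (Orb_BInf_bconcat x _ _ [] Hx I eq_refl);
    [apply (BInf_neq_at _ _ (S k1)) | apply (BInf_neq_at _ _ k2) | apply (BInf_neq_at _ _ k1)];
    simpl; rewrite ?Nat.add_succ_r, ?Nat.add_0_r, ?Nat.add_1_r; auto.
Qed.

End BoundaryPaths.

Theorem proposition10p7 (E : graph) :
  ((forall U : bpath E -> Prop,
      bd_clopen U -> (exists y, in_bd y /\ U y) ->
      exists x y, in_bd x /\ U x /\ U y /\ x <> y /\ Orb x y)
   <-> (condL E /\ condT E))
  /\
  ((forall x : bpath E, in_bd x ->
      exists a b c, Orb x a /\ Orb x b /\ Orb x c /\
        a <> b /\ a <> c /\ b <> c)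
   <-> (forall v : vert E, ~ @degenerate E v)).
Proof.
  split; split.
  - apply condL_condT_of_clopen_orbits.
  - intros [HL HT]. apply clopen_orbits_of_condL_condT; auto.
  - intros H v Hv. destruct (degenerate_not_three_in_orbit v Hv) as (p & Hp & Hn).
    exact (Hn (H p Hp)).
  - intros HD [v l|x]; [apply BFin_three_in_orbit | apply BInf_three_in_orbit]; auto.
Qed.
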